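(* For every $n\ge1$, \[ R_n=\inf\big\{R_n(\mathbb{P}):\ \mathbb{P}\in\mathcal{P}_n,\ {}^{\gamma}\mathbb{P}\pi=\mathbb{P}\ \text{for all }(\gamma,\pi)\in S_{inv}\times S_n\big\}. \]
   Context: Scheduling on two machines with $n$ tasks. A processing-time matrix is $T\in\mathbb{R}_{++}^{2\times n}$; an allocation is $X\in\{0,1\}^{2\times n}$ with $X_{1j}+X_{2j}=1$; makespan $M(X,T)=\max_{i\in\{1,2\}}\sum_jX_{ij}T_{ij}$; $M^*(T)=\min_XM(X,T)$. $\mathcal{P}_n$ is the set of Borel probability measures on $\mathbb{R}^n$ supported in $\mathbb{R}_{++}^n$. For $\mathbb{P}\in\mathcal{P}_n$, algorithm $\mathcal{A}^{\mathbb{P}}$ draws $\mathbf{z}\sim\mathbb{P}$ and sends task $j$ to machine 1 iff $T_{1j}/T_{2j}<z_j$ (else to machine 2); $M(\mathbb{P},T)$ is its expected makespan, $R_n(\mathbb{P})=\sup_TM(\mathbb{P},T)/M^*(T)\in[1,\infty]$, and $R_n=\inf_{\mathbb{P}\in\mathcal{P}_n}R_n(\mathbb{P})$. $S_n$ is the symmetric group on $[n]$; $\mathbf{z}\pi$ is $\mathbf{z}$ with entries permuted by $\pi$. $S_{inv}=\{id,inv\}$ acts by ${}^{id}\mathbf{x}=\mathbf{x}$, ${}^{inv}\mathbf{x}=(1/x_1,\dots,1/x_n)$. ${}^{\gamma}\mathbb{P}\pi$ is the distribution of ${}^{\gamma}\mathbf{z}\pi$ for $\mathbf{z}\sim\mathbb{P}$.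 *)

From HB Require Import structures.
From mathcomp Require Import all_boot all_order all_algebra all_fingroup.
From mathcomp Require Import all_classical all_reals all_analysis.

Set Implicit Arguments.
Unset Strict Implicit.
Unset Printing Implicit Defensive.

Import Order.TTheory GRing.Theory Num.Theory.
Local Open Scope classical_set_scope.
Local Open Scope ring_scope.

Section Scheduling.
Variable R : realType.
Variable n : nat.

(* Processing-time matrix T in R_{++}^{2 x n}: row 0 = machine 1, row 1 = machine 2. *)
Definition pos_matrix (T : 'M[R]_(2, n)) : Prop := forall i j, 0 < T i j.

(* An allocation X in {0,1}^{2 x n} with X_{1j}+X_{2j} = 1 is encoded by
   x : {ffun 'I_n -> bool}, x j = true iff X_{1j} = 1 (task j on machine 1). *)
Definition makespan (x : {ffun 'I_n -> bool}) (T : 'M[R]_(2, n)) : R :=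
  Num.max (\sum_(j < n | x j) T ord0 j) (\sum_(j < n | ~~ x j) T 1 j).

Definition opt_makespan (T : 'M[R]_(2, n)) : R :=
  \big[Num.min/makespan [ffun => true] T]_(x : {ffun 'I_n -> bool}) makespan x T.

Definition alloc_of (z : n.-tuple R) (T : 'M[R]_(2, n)) : {ffun 'I_n -> bool} :=
  [ffun j => T ord0 j / T 1 j < tnth z j].

Definition supported_pos (P : probability (n.-tuple R) R) : Prop :=
  P [set z : n.-tuple R | forall j, 0 < tnth z j] = 1%E.

Definition exp_makespan (P : probability (n.-tuple R) R) (T : 'M[R]_(2, n))
  : \bar R :=
  (\int[P]_z (makespan (alloc_of z T) T)%:E)%E.

Definition Rn_of (P : probability (n.-tuple R) R) : \bar R :=
  ereal_sup [set (exp_makespan P T * ((opt_makespan T)^-1)%:E)%E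
            | T in pos_matrix].

Definition Rn : \bar R := ereal_inf [set Rn_of P | P in supported_pos].

(* the action of (gamma, pi) in S_inv x S_n : z |-> ^gamma (z pi) ;
   gamma = false is id, gamma = true is inv. *)
Definition act (gamma : bool) (pi : 'S_n) (z : n.-tuple R) : n.-tuple R :=
  [tuple (if gamma then (tnth z (pi j))^-1 else tnth z (pi j)) | j < n].

Definition invariant (P : probability (n.-tuple R) R) : Prop :=
  forall (gamma : bool) (pi : 'S_n) (A : set (n.-tuple R)),
    measurable A -> P (act gamma pi @^-1` A) = P A.

End Scheduling.

Definition sym_supported (R : realType) (n : nat)
  : set (probability (n.-tuple R) R) :=
  fun P => supported_pos P /\ invariant P.
Arguments sym_supported R n _ : clear implicits.

From Pilot Require Import Defs.
From HB Require Import structures.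
From mathcomp Require Import all_boot all_order all_algebra all_fingroup.
From mathcomp Require Import all_classical all_reals all_analysis.
From mathcomp Require Import measurable_realfun.

(* Only R_n >= inf over invariant P needs proof. Given P, let Q be the uniform
   mixture of the images of P under the 2 n! maps z |-> ^gamma (z pi): Q is
   invariant and supported in R_{++}^n, and R_n(Q) <= R_n(P) because every
   image of P does as well as P on every instance. Indeed, threshold z pi on T
   is threshold z on T with its tasks relabelled by pi, and threshold 1/z is
   threshold z on the instance with the two machines swapped, except that the
   ties T_1j/T_2j = z_j are broken the other way. Relabelling preserves M^*,
   and the ties disappear once the second machine of the swapped instance is
   slowed down by the factor 1 + 1/(m+1); dominated convergence as m -> oo
   then transfers the bound R_n(P) M^*(T). *)

Set Implicit Arguments.
Unset Strict Implicit.
Unset Printing Implicit Defensive.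
Import Order.TTheory GRing.Theory Num.Theory numFieldNormedType.Exports.
Local Open Scope classical_set_scope.
Local Open Scope ring_scope.

Section makespan_bounds.
Variables (R : realType) (n : nat).
Implicit Types (T : 'M[R]_(2, n)) (x : {ffun 'I_n -> bool}).

Lemma pos_matrix_ge0 T : pos_matrix T -> forall i j, 0 <= T i j.
Proof. by move=> hT i j; exact/ltW/hT. Qed.

Lemma opt_makespan_le T x : opt_makespan T <= makespan x T.
Proof. by rewrite /opt_makespan (bigD1 x) //= ge_min lexx. Qed.

Lemma opt_makespan_attained T : exists x, opt_makespan T = makespan x T.
Proof.
rewrite /opt_makespan; elim/big_rec: _ => [|y _ _ [x ->]].
  by exists [ffun => true].
by case: (leP (makespan y T) (makespan x T)) => _; [exists y | exists x].
Qed.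

Lemma makespan_ge0 T x : (forall i j, 0 <= T i j) -> 0 <= makespan x T.
Proof. by move=> hT; rewrite /makespan le_max sumr_ge0. Qed.

Lemma makespan_gt0 T x : (0 < n)%N -> pos_matrix T -> 0 < makespan x T.
Proof.
move=> hn hT; pose j0 : 'I_n := Ordinal hn.
have sum_gt0 i (P : pred 'I_n) : P j0 -> 0 < \sum_(j | P j) T i j.
  move=> Pj0; rewrite (bigD1 j0) //= ltr_pwDl //.
  by apply: sumr_ge0 => j _; exact: pos_matrix_ge0.
rewrite /makespan lt_max; case: (boolP (x j0)) => xj0; apply/orP.
- by left; exact: sum_gt0.
- by right; exact: sum_gt0.
Qed.

Lemma opt_makespan_gt0 T : (0 < n)%N -> pos_matrix T -> 0 < opt_makespan T.
Proof.
by move=> hn hT; have [x ->] := opt_makespan_attained T; exact: makespan_gt0.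
Qed.

Lemma makespan_le_total T x : (forall i j, 0 <= T i j) ->
  makespan x T <= \sum_j (T ord0 j + T 1 j).
Proof.
move=> hT; rewrite /makespan ge_max big_split /=; apply/andP; split.
- apply: le_trans (_ : _ <= \sum_j T ord0 j) _; last by rewrite lerDl sumr_ge0.
  by rewrite [leRHS](bigID x) /= lerDl sumr_ge0.
- apply: le_trans (_ : _ <= \sum_j T 1 j) _; last by rewrite lerDr sumr_ge0.
  by rewrite [leRHS](bigID x) /= lerDr sumr_ge0.
Qed.

Lemma makespan_le_scale T1 T2 (a : R) x : 0 <= a ->
  (forall i j, T2 i j <= a * T1 i j) -> makespan x T2 <= a * makespan x T1.
Proof.
move=> a0 hT; rewrite /makespan maxr_pMr // ge_max !le_max !mulr_sumr.
by rewrite !ler_sum ?orbT.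
Qed.

Lemma opt_makespan_le_scale T1 T2 (a : R) : 0 <= a ->
  (forall i j, T2 i j <= a * T1 i j) -> opt_makespan T2 <= a * opt_makespan T1.
Proof.
move=> a0 hT; have [x ->] := opt_makespan_attained T1.
exact: le_trans (opt_makespan_le _ x) (makespan_le_scale x a0 hT).
Qed.

End makespan_bounds.

Section relabelling.
Variables (R : realType) (n : nat).
Implicit Types (T : 'M[R]_(2, n)) (x : {ffun 'I_n -> bool}) (s : 'S_n).

Definition swap_machine (swap : bool) (i : 'I_2) : 'I_2 :=
  if swap then (if i == ord0 then 1 else ord0) else i.

Definition relabel swap s T : 'M[R]_(2, n) :=
  \matrix_(i, k) T (swap_machine swap i) (s^-1%g k).

Definition relabel_alloc swap s x : {ffun 'I_n -> bool} :=
  [ffun k => x (s^-1%g k) (+) swap].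

Lemma relabel_pos swap s T : pos_matrix T -> pos_matrix (relabel swap s T).
Proof. by move=> hT i k; rewrite mxE. Qed.

Lemma makespan_relabel swap s T x :
  makespan (relabel_alloc swap s x) (relabel swap s T) = makespan x T.
Proof.
rewrite /makespan (reindex_inj (@perm_inj _ s)) /=.
rewrite [X in Num.max _ X](reindex_inj (@perm_inj _ s)) /=.
under eq_bigl do rewrite ffunE permK.
under eq_bigr do rewrite mxE permK.
under [X in Num.max _ X]eq_bigl do rewrite ffunE permK.
under [X in Num.max _ X]eq_bigr do rewrite mxE permK.
case: swap => /=; last by under eq_bigl do rewrite addbF;
  under [X in Num.max _ X]eq_bigl do rewrite addbF.
under eq_bigl do rewrite addbT.
under [X in Num.max _ X]eq_bigl do rewrite addbT negbK.
by rewrite maxC.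
Qed.

Lemma relabel_allocK swap s :
  cancel (relabel_alloc swap s) (relabel_alloc swap s^-1%g).
Proof.
by move=> x; apply/ffunP => k; rewrite !ffunE invgK permK -addbA addbb addbF.
Qed.

Lemma opt_makespan_relabel swap s T :
  opt_makespan (relabel swap s T) = opt_makespan T.
Proof.
have [x optT] := opt_makespan_attained T.
have [y optT'] := opt_makespan_attained (relabel swap s T).
apply/le_anti; apply/andP; split.
- by rewrite optT -(makespan_relabel swap s) opt_makespan_le.
- rewrite optT' -[y](relabel_allocK swap s^-1%g) invgK makespan_relabel.
  exact: opt_makespan_le.
Qed.

End relabelling.

Section thresholds.
Variables (R : realType) (n : nat).
Implicit Types (T : 'M[R]_(2, n)) (z : n.-tuple R) (s : 'S_n).

Definition pos_tuple : set (n.-tuple R) := [set z | forall j, 0 < tnth z j].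

Lemma act_pos_tuple gamma s z : pos_tuple z -> pos_tuple (Defs.act gamma s z).
Proof. by move=> hz j; rewrite tnth_mktuple; case: gamma; rewrite ?invr_gt0.
Qed.

Lemma act_comp a b s t z :
  Defs.act b t (Defs.act a s z) = Defs.act (a (+) b) (t * s)%g z.
Proof.
apply: eq_from_tnth => j; rewrite !tnth_mktuple permM.
by case: a; case: b => //=; rewrite invrK.
Qed.

Lemma relabel_alloc_act_perm s z T :
  relabel_alloc false s (alloc_of (Defs.act false s z) T) =
  alloc_of z (relabel false s T).
Proof. by apply/ffunP => k; rewrite !ffunE !mxE tnth_mktuple permKV addbF. Qed.

Definition perturb (d : R) T : 'M[R]_(2, n) :=
  \matrix_(i, k) (if i == ord0 then T i k else T i k * (1 + d)).

Lemma perturb_pos d T : 0 <= d -> pos_matrix T -> pos_matrix (perturb d T).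
Proof.
move=> d0 hT i k; rewrite mxE; case: ifP => _; rewrite ?mulr_gt0 //.
by rewrite ltr_pwDl.
Qed.

Lemma perturb_ge d T : 0 <= d -> pos_matrix T ->
  forall i k, T i k <= perturb d T i k.
Proof.
move=> d0 hT i k; rewrite mxE; case: ifP => // _.
by rewrite ler_peMr ?lerDl // ltW.
Qed.

Lemma perturb_le d T : 0 <= d -> pos_matrix T ->
  forall i k, perturb d T i k <= (1 + d) * T i k.
Proof.
move=> d0 hT i k; rewrite mxE; case: ifP => _; last by rewrite mulrC.
by rewrite ler_peMl ?lerDl // ltW.
Qed.

Lemma near_div1Dharmonic_lt (c z : R) : 0 < c ->
  \forall m \near \oo, (c / (1 + harmonic m) < z) = (c <= z).
Proof.
move=> c0; have [cz | zc] := leP c z.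
- apply: nearW => m; apply/(lt_le_trans _ cz).
  by rewrite ltr_pdivrMr ?ltr_pMr ?ltr_pwDr ?harmonic_gt0 // ltr_pwDl.
- have h1 : (fun m => 1 + harmonic m) @ \oo --> (1 + 0 : R).
    by apply: cvgD; [exact: cvg_cst | exact: cvg_harmonic].
  have : (fun m => c / (1 + harmonic m)) @ \oo --> c / (1 + 0).
    by apply: cvgM; [exact: cvg_cst | apply: cvgV h1; rewrite addr0 oner_neq0].
  rewrite addr0 invr1 mulr1 => /cvgr_gt /(_ z zc); apply: filterS => m.
  by move=> /lt_gtF ->.
Qed.

(* Under threshold 1/z_k, task s^-1 k goes to machine 2 iff T_2/T_1 <= z_k,
   a non-strict comparison; on the perturbed swapped instance A^P compares
   strictly, and the two agree for m large. *)
Lemma near_alloc_of_perturb_swap s z T : pos_matrix T -> pos_tuple z ->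
  \forall m \near \oo, alloc_of z (perturb (harmonic m) (relabel true s T)) =
    relabel_alloc true s (alloc_of (Defs.act true s z) T).
Proof.
move=> hT hz.
suff /filter_forall : forall k, \forall m \near \oo,
    alloc_of z (perturb (harmonic m) (relabel true s T)) k =
    relabel_alloc true s (alloc_of (Defs.act true s z) T) k.
  by apply: filterS => m /ffunP.
move=> k; set a := T ord0 (s^-1%g k); set b := T 1 (s^-1%g k).
have a0 : 0 < a := hT _ _; have b0 : 0 < b := hT _ _.
have -> : relabel_alloc true s (alloc_of (Defs.act true s z) T) k =
    (b / a <= tnth z k).
  rewrite !ffunE tnth_mktuple permKV addbT -invf_div.
  by rewrite ltf_pV2 ?posrE ?divr_gt0 // -leNgt.
near=> m; rewrite !ffunE !mxE /= invfM mulrA; near: m.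
exact: near_div1Dharmonic_lt (divr_gt0 b0 a0).
Unshelve. all: by end_near.
Qed.

End thresholds.
Arguments pos_tuple {R n}.

Section measurability.
Variables (R : realType) (n : nat).

Lemma measurable_inv : measurable_fun [set: R] (@GRing.inv R).
Proof.
rewrite (_ : GRing.inv = fun x : R => if x == 0 then 0 else x^-1); last first.
  by apply/funext => x; case: eqP => // ->; rewrite invr0.
apply: measurable_fun_if => //; first exact: measurable_fun_eqr.
rewrite setTI (_ : _ @^-1` _ = [set x : R | x != 0]); last first.
  by apply/seteqP; split => x /=; case: eqP.
apply: open_continuous_measurable_fun; first exact: open_neq.
by move=> x; rewrite inE => /inv_continuous.
Qed.

Lemma measurable_act gamma (s : 'S_n) :
  measurable_fun [set: n.-tuple R] (Defs.act gamma s).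
Proof.
apply/measurable_fun_tnthP => i.
rewrite (_ : _ \o _ = fun z : n.-tuple R =>
  if gamma then (tnth z (s i))^-1 else tnth z (s i)); last first.
  by apply/funext => z /=; rewrite tnth_mktuple.
case: gamma; last exact: measurable_tnth.
exact: measurableT_comp measurable_inv (measurable_tnth _).
Qed.

HB.instance Definition _ gamma (s : 'S_n) :=
  isMeasurableFun.Build _ _ _ _ (Defs.act gamma s) (measurable_act gamma s).

Lemma measurable_pos_tuple : measurable (@pos_tuple R n).
Proof.
rewrite (_ : @pos_tuple R n = \bigcap_j ((@tnth n R)^~ j @^-1` `]0, +oo[)).
  apply: fin_bigcap_measurable => // j _.
  by rewrite -[X in measurable X]setTI; exact: measurable_tnth.
by apply/seteqP; split => z /= hz j => [_|]; [|have := hz j I];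
  rewrite /= in_itv /= andbT.
Qed.

Lemma measurable_makespan_alloc (A B : 'M[R]_(2, n)) :
  measurable_fun [set: n.-tuple R] (fun z => (makespan (alloc_of z A) B)%:E).
Proof.
apply/measurable_EFinP; rewrite /makespan.
under eq_fun do rewrite big_mkcond [X in Num.max _ X]big_mkcond /=.
apply: measurable_maxr; apply: measurable_sum => j;
  under eq_fun do rewrite ffunE; try under eq_fun do rewrite if_neg;
  apply: measurable_fun_ifT => //; apply: measurable_fun_ltr => //;
  exact: measurable_tnth.
Qed.

End measurability.

Section uniform_mixture.
Context d (T : measurableType d) (R : realType) (I : finType) (i0 : I).
Variable mu : I -> probability T R.

Definition mixture : set T -> \bar R :=
  mscale (#|I|%:R^-1)%:nng
    (msum (fun k => mu (nth i0 (enum I) k) : {measure set T -> \bar R}) #|I|).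

Let sum_enum (F : I -> \bar R) :
  \sum_(k < #|I|) F (nth i0 (enum I) k) = \sum_i F i.
Proof.
rewrite [RHS](_ : _ = \sum_(i <- enum I) F i).
  by rewrite (big_nth i0) big_mkord cardE.
by rewrite big_enum; apply: eq_bigl => i; rewrite inE.
Qed.

Lemma mixtureE A : mixture A = ((#|I|%:R^-1)%:E * \sum_i mu i A)%E.
Proof.
by rewrite /mixture /mscale /=; congr (_ * _)%E; exact: (sum_enum (mu^~ A)).
Qed.

Let mean_cst (c : R) : ((#|I|%:R^-1)%:E * \sum_(i : I) c%:E)%E = c%:E.
Proof.
rewrite sumEFin -EFinM sumr_const -[c *+ _]mulr_natr mulrCA mulVf ?mulr1 //.
by rewrite pnatr_eq0 -lt0n; apply/card_gt0P; exists i0.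
Qed.

Lemma mixture_cst A (c : R) : (forall i, mu i A = c%:E) -> mixture A = c%:E.
Proof. by move=> muA; rewrite mixtureE; under eq_bigr do rewrite muA. Qed.

Let mixture0 : mixture set0 = 0%E. Proof. exact: measure0. Qed.
Let mixture_ge0 A : (0 <= mixture A)%E. Proof. exact: measure_ge0. Qed.
Let mixture_sigma_additive : semi_sigma_additive mixture.
Proof. exact: measure_semi_sigma_additive. Qed.
HB.instance Definition _ :=
  isMeasure.Build _ _ _ mixture mixture0 mixture_ge0 mixture_sigma_additive.

Let mixture_setT : mixture setT = 1%E.
Proof. by apply: mixture_cst => i; exact: probability_setT. Qed.
HB.instance Definition _ :=
  Measure_isProbability.Build _ _ _ mixture mixture_setT.

Lemma integral_mixture_le (f : T -> \bar R) (b : \bar R) :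
  measurable_fun setT f -> (forall x, 0 <= f x)%E ->
  (forall i, \int[mu i]_x f x <= b)%E -> (\int[mixture]_x f x <= b)%E.
Proof.
move=> mf f0 fb; rewrite ge0_integral_mscale // ge0_integral_measure_sum //.
rewrite (sum_enum (fun i => (\int[mu i]_x f x)%E)).
case: b fb => [r | _ | fb]; last first.
- have := le_trans (integral_ge0 (mu i0) (fun x _ => f0 x)) (fb i0).
  by rewrite leeNy_eq.
- by rewrite leey.
- move=> fb; rewrite -[leRHS]mean_cst lee_wpmul2l ?lee_fin ?invr_ge0 //.
  exact: lee_sum.
Qed.

End uniform_mixture.

Section symmetrization.
Variables (R : realType) (n : nat).
Implicit Types (P : probability (n.-tuple R) R).

Definition symmetrization P : probability (n.-tuple R) R :=
  mixture (false, 1%g)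
    (fun g : bool * 'S_n => distribution P (Defs.act g.1 g.2)).

Lemma symmetrizationE P A : symmetrization P A =
  ((#|{: bool * 'S_n}|%:R^-1)%:E *
    \sum_(g : bool * 'S_n) P (Defs.act g.1 g.2 @^-1` A))%E.
Proof. exact: mixtureE. Qed.

Lemma invariant_symmetrization P : Defs.invariant (symmetrization P).
Proof.
move=> b t A mA; rewrite !symmetrizationE; congr (_ * _)%E.
have mul_inj : injective (fun g : bool * 'S_n => (g.1 (+) b, (t * g.2)%g)).
  by move=> [a s] [a' s'] /= [/addIb -> /mulgI ->].
rewrite [RHS](reindex_inj mul_inj); apply: eq_bigr => -[a s] _ /=.
by congr (P _); apply/seteqP; split => z /=; rewrite act_comp.
Qed.

Lemma supported_pos_symmetrization P :
  supported_pos P -> supported_pos (symmetrization P).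
Proof.
move=> hP; apply: mixture_cst => -[gamma s] /=.
have mpos := @measurable_pos_tuple R n.
have mact : measurable (Defs.act gamma s @^-1` @pos_tuple R n).
  by rewrite -[X in measurable X]setTI; exact: measurable_act.
apply/eqP; rewrite eq_le probability_le1 //= -hP.
by apply: le_measure; rewrite ?inE // => z; exact: act_pos_tuple.
Qed.

End symmetrization.

Lemma cvge_le_scale_harmonic (R : realType) (u : (\bar R)^nat) (l a : \bar R) :
  (0 <= a)%E -> u @ \oo --> l ->
  (forall m, u m <= (1 + harmonic m)%:E * a)%E -> (l <= a)%E.
Proof.
case: a => [r r0 ul ua | _ _ _ | //]; last exact: leey.
have h1 : (fun k => (1 + harmonic k)%:E) @ \oo --> (1 + 0 : R)%:E.
  apply: cvg_EFin; first exact: nearW.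
  by apply: cvgD; [exact: cvg_cst | exact: cvg_harmonic].
have := cvgeZr (y := r%:E) isT h1; rewrite addr0 mul1e => /cvge_to_ge; apply.
apply: nearW => k; apply: (cvge_to_le ul); exists k => // m /= km.
apply: le_trans (ua m) _; rewrite lee_wpmul2r // lee_fin lerD2l.
by rewrite lef_pV2 ?posrE // ler_nat.
Qed.

Section ratio.
Variables (R : realType) (n : nat).
Hypothesis hn : (0 < n)%N.
Implicit Types (P Q : probability (n.-tuple R) R) (T : 'M[R]_(2, n)).

Lemma exp_makespan_le P T : pos_matrix T ->
  (exp_makespan P T <= Rn_of P * (opt_makespan T)%:E)%E.
Proof.
move=> hT; have opt_gt0 := opt_makespan_gt0 hn hT.
have -> : exp_makespan P T =
    (exp_makespan P T * ((opt_makespan T)^-1)%:E * (opt_makespan T)%:E)%E.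
  by rewrite -muleA -EFinM mulVf ?gt_eqF // mule1.
apply: lee_wpmul2r; first by rewrite lee_fin ltW.
by apply: ereal_sup_ubound; exists T.
Qed.

Lemma Rn_of_ge0 P : (0 <= Rn_of P)%E.
Proof.
pose T1 : 'M[R]_(2, n) := const_mx 1.
have hT1 : pos_matrix T1 by move=> i j; rewrite mxE ltr01.
apply: le_trans (_ : _ <= exp_makespan P T1 * ((opt_makespan T1)^-1)%:E)%E _.
  apply: mule_ge0; last by rewrite lee_fin invr_ge0 ltW // opt_makespan_gt0.
  apply: integral_ge0 => z _; rewrite lee_fin makespan_ge0 //.
  exact: pos_matrix_ge0.
by apply: ereal_sup_ubound; exists T1.
Qed.

Lemma Rn_of_le P Q :
  (forall T, pos_matrix T ->
    exp_makespan Q T <= Rn_of P * (opt_makespan T)%:E)%E ->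
  (Rn_of Q <= Rn_of P)%E.
Proof.
move=> QP; apply: ge_ereal_sup => _ [T hT <-].
have opt_gt0 := opt_makespan_gt0 hn hT.
apply: le_trans (lee_wpmul2r _ (QP T hT)) _.
  by rewrite lee_fin invr_ge0 ltW.
by rewrite -muleA -EFinM mulfV ?gt_eqF // mule1.
Qed.

End ratio.

Section symmetrization_ratio.
Variables (R : realType) (n : nat).
Hypothesis hn : (0 < n)%N.
Variable P : probability (n.-tuple R) R.
Hypothesis hP : supported_pos P.
Implicit Types (T : 'M[R]_(2, n)).

Lemma integral_makespan_limit_le T (x : n.-tuple R -> {ffun 'I_n -> bool}) :
  pos_matrix T -> measurable_fun setT (fun z => (makespan (x z) T)%:E) ->
  (forall z, pos_tuple z ->
    \forall m \near \oo, alloc_of z (perturb (harmonic m) T) = x z) ->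
  (\int[P]_z (makespan (x z) T)%:E <= Rn_of P * (opt_makespan T)%:E)%E.
Proof.
move=> hT mx x_lim; have T_ge0 := pos_matrix_ge0 hT.
pose u m z := (makespan (alloc_of z (perturb (harmonic m) T)) T)%:E.
have u_cvg : \forall z \ae P, setT z -> u ^~ z @ \oo --> (makespan (x z) T)%:E.
  have mpos := @measurable_pos_tuple R n.
  exists (~` pos_tuple); split; first exact: measurableC.
  - by rewrite probability_setC ?hP ?subee.
  - move=> z /= not_cvg z_pos; apply: not_cvg => _; apply: cvg_near_cst.
    by apply: filterS (x_lim z z_pos) => m; rewrite /u => ->.
have u_bound : \forall z \ae P, forall m, setT z ->
    (`|u m z| <= (EFin \o cst (\sum_j (T ord0 j + T 1 j))%R) z)%E.
  apply: aeW => z m _; rewrite gee0_abs ?lee_fin.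
  - exact: makespan_le_total.
  - exact: makespan_ge0.
have [_ _ int_cvg] := dominated_convergence measurableT
  (fun m => measurable_makespan_alloc _ _) mx u_cvg
  (finite_measure_integrable_cst _ _ measurableT) u_bound.
apply: cvge_le_scale_harmonic int_cvg _ => [|m].
  by rewrite mule_ge0 ?Rn_of_ge0 // lee_fin ltW // opt_makespan_gt0.
have hTm : pos_matrix (perturb (harmonic m) T).
  exact: perturb_pos (harmonic_ge0 m) hT.
apply: le_trans (_ : _ <= exp_makespan P (perturb (harmonic m) T))%E _.
  apply: ge0_le_integral => //; do ?exact: measurable_makespan_alloc.
  - by move=> z _; rewrite lee_fin makespan_ge0.
  - move=> z _; rewrite lee_fin -[X in _ <= X]mul1r.
    apply: makespan_le_scale => // i k.
    by rewrite mul1r perturb_ge ?harmonic_ge0.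
apply: le_trans (exp_makespan_le hn P hTm) _.
rewrite muleCA -EFinM lee_wpmul2l ?Rn_of_ge0 // lee_fin.
apply: opt_makespan_le_scale (perturb_le (harmonic_ge0 m) hT).
by rewrite addr_ge0 ?harmonic_ge0.
Qed.

Lemma integral_makespan_act_le gamma (s : 'S_n) T : pos_matrix T ->
  (\int[P]_z (makespan (alloc_of (Defs.act gamma s z) T) T)%:E <=
    Rn_of P * (opt_makespan T)%:E)%E.
Proof.
move=> hT; rewrite -(opt_makespan_relabel gamma s T).
under eq_integral do rewrite -(makespan_relabel gamma s).
case: gamma.
- apply: integral_makespan_limit_le; first exact: relabel_pos.
    under eq_fun do rewrite makespan_relabel.
    exact: measurableT_comp (measurable_makespan_alloc T T)
      (measurable_act true s).
  by move=> z; exact: near_alloc_of_perturb_swap.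
- under eq_integral do rewrite relabel_alloc_act_perm.
  exact: exp_makespan_le (relabel_pos _ _ hT).
Qed.

Lemma exp_makespan_symmetrization_le T : pos_matrix T ->
  (exp_makespan (symmetrization P) T <= Rn_of P * (opt_makespan T)%:E)%E.
Proof.
move=> hT; apply: integral_mixture_le => [||[gamma s]].
- exact: measurable_makespan_alloc.
- by move=> z; rewrite lee_fin makespan_ge0 //; exact: pos_matrix_ge0.
- rewrite ge0_integral_distribution; last 2 first.
  + exact: measurable_makespan_alloc.
  + by move=> z; rewrite lee_fin makespan_ge0 //; exact: pos_matrix_ge0.
  exact: integral_makespan_act_le.
Qed.

End symmetrization_ratio.

Theorem theorem4 (R : realType) (n : nat) (hn : (0 < n)%N) :
  Rn R n = ereal_inf [set Rn_of P | P in sym_supported R n].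
Proof.
apply/le_anti/andP; split.
- by apply: ereal_inf_le_tmp => _ [P [hP _] <-]; exists P.
- apply: le_ereal_inf_tmp => _ [P hP <-].
  apply: le_trans (Rn_of_le hn (exp_makespan_symmetrization_le hn hP)).
  apply: ereal_inf_lbound; exists (symmetrization P) => //; split.
  + exact: supported_pos_symmetrization.
  + exact: invariant_symmetrization.
Qed.
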